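(* Let $n\ge 1$, let $\mathcal{C}$ be a set of conditions, let $\varnothing\notin\mathcal{C}$ denote the null condition, fix $c\in\mathcal{C}$, let $N=2^m$ with $m\ge 1$ an integer, and set $d=1/N$. Let $s:\mathbb{R}^n\times[0,1]\times(\mathcal{C}\cup\{\varnothing\})\times(0,1]\to\mathbb{R}^n$ be any function, and for real $\omega$ define $g^{\omega}(x,t,c,\delta)=\omega\, s(x,t,c,\delta)+(1-\omega)\, s(x,t,\varnothing,\delta)$. Fix $w\in\mathbb{R}$ and points $y_0,\dots,y_N\in\mathbb{R}^n$, and assume that for every $j\in\{0,\dots,m-1\}$ and every index $i\in\{0,\dots,N-1\}$ that is a multiple of $2^{j+1}$, $$s\!\left(y_i,\tfrac{i}{N},c,2^{j+1}d\right)=\tfrac12\Big[g^{w}\!\left(y_i,\tfrac{i}{N},c,2^{j}d\right)+g^{w}\!\left(y_{i+2^j},\tfrac{i+2^j}{N},c,2^{j}d\right)\Big],$$ $$s\!\left(y_i,\tfrac{i}{N},\varnothing,2^{j+1}d\right)=\tfrac12\Big[s\!\left(y_i,\tfrac{i}{N},\varnothing,2^{j}d\right)+s\!\left(y_{i+2^j},\tfrac{i+2^j}{N},\varnothing,2^{j}d\right)\Big].$$ Then for every $j\in\{0,1,\dots,m\}$ and every index $i\in\{0,\dots,N-1\}$ that is a multiple of $2^{j}$: $$s\!\left(y_i,\tfrac{i}{N},\varnothing,2^{j}d\right)=\frac{1}{2^j}\sum_{l=0}^{2^j-1}s\!\left(y_{i+l},\tfrac{i+l}{N},\varnothing,d\right),$$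 and $$g^{w}\!\left(y_i,\tfrac{i}{N},c,2^{j}d\right)=\frac{1}{2^j}\sum_{l=0}^{2^j-1} g^{\,w^{j+1}}\!\left(y_{i+l},\tfrac{i+l}{N},c,d\right).$$
   Context: Here $s$ models a shortcut network (inputs: sample, time, condition or null condition $\varnothing$, step size) and $g^\omega$ its classifier-free-guided output with scale $\omega$, using the convention $g^\omega=\omega s(\cdot,c,\cdot)+(1-\omega)s(\cdot,\varnothing,\cdot)$. The hypotheses express exact self-consistency (zero self-consistency loss) at the given points: a step of size $2\delta$ equals the average of two consecutive steps of size $\delta$, guided with fixed scale $w$ for the conditional branch and unguided for the null-condition branch. In the paper the points are $y_0=x_0$, $y_{i+1}=y_i+s(y_i,i/N,c,d)\,d$. *)

From HB Require Import structures.
From mathcomp Require Import all_boot all_order all_algebra.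
From mathcomp Require Import reals.
Set Implicit Arguments. Unset Strict Implicit. Unset Printing Implicit Defensive.
Import Order.TTheory GRing.Theory Num.Theory.
Local Open Scope ring_scope.

(* Shortcut network s : R^n x time x (C ∪ {∅}) x step -> R^n.
   Conditions are [Some c] (c : C); the null condition ∅ is [None]. *)
Definition shortcut (R : realType) (n : nat) (C : Type) :=
  'rV[R]_n -> R -> option C -> R -> 'rV[R]_n.

Definition guided (R : realType) (n : nat) (C : Type) (s : shortcut R n C)
  (omega : R) (x : 'rV[R]_n) (t : R) (c : C) (delta : R) : 'rV[R]_n :=
  omega *: s x t (Some c) delta + (1 - omega) *: s x t None delta.

From HB Require Import structures.
From mathcomp Require Import all_boot all_order all_algebra.
From mathcomp Require Import reals ring zify.
Set Implicit Arguments. Unset Strict Implicit. Unset Printing Implicit Defensive.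
Import Order.TTheory GRing.Theory Num.Theory.
Local Open Scope ring_scope.

(* Self-consistency says that the step of size 2^(j+1) d at a dyadic point is the
   mean of the two steps of size 2^j d, so by induction on j the unguided output
   at scale 2^j d is the mean of the 2^j unit-scale outputs below it.  For the
   guided output, write g^w = s_null + w (s_c - s_null): the offset s_c - s_null
   satisfies the same recursion with an extra factor w at each level, so at scale
   2^j d it is w^j times the mean of the unit-scale offsets, which recombines
   into the mean of g^(w^(j+1)). *)

Lemma big_ord_exp2S (V : zmodType) (j : nat) (F : nat -> V) :
  \sum_(l < 2 ^ j.+1) F l = \sum_(l < 2 ^ j) F l + \sum_(l < 2 ^ j) F (2 ^ j + l)%N.
Proof.
have -> : (2 ^ j.+1 = 2 ^ j + 2 ^ j)%N by rewrite expnS mul2n addnn.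
by rewrite big_split_ord.
Qed.

Lemma dyadic_sibling_lt (m j i : nat) :
  (j < m)%N -> (i < 2 ^ m)%N -> (2 ^ j.+1 %| i)%N -> (i + 2 ^ j < 2 ^ m)%N.
Proof.
move=> ltjm ltim dvd_i.
have dvd_m : (2 ^ j.+1 %| 2 ^ m)%N by rewrite dvdn_exp2l.
have : (2 ^ j.+1 <= 2 ^ m - i)%N by rewrite dvdn_leq ?subn_gt0 ?dvdn_sub.
by rewrite expnS; have := expn_gt0 2 j; lia.
Qed.

Section DyadicAverage.

Variables (R : fieldType) (V : lmodType R) (m : nat) (k : R) (f : nat -> nat -> V).

Hypothesis f_halve : forall j i, (j < m)%N -> (i < 2 ^ m)%N -> (2 ^ j.+1 %| i)%N ->
  f j.+1 i = k *: (2^-1 *: (f j i + f j (i + 2 ^ j)%N)).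

Lemma dyadic_average j i : (j <= m)%N -> (i < 2 ^ m)%N -> (2 ^ j %| i)%N ->
  f j i = k ^+ j *: (((2 ^ j)%:R)^-1 *: \sum_(l < 2 ^ j) f 0%N (i + l)%N).
Proof.
elim: j i => [|j IHj] i ltjm ltim dvd_i.
  by rewrite expr0 invr1 !scale1r big_ord1 addn0.
have dvd_i' : (2 ^ j %| i)%N by apply: dvdn_trans dvd_i; rewrite expnS dvdn_mull.
have dvd_sib : (2 ^ j %| i + 2 ^ j)%N by rewrite dvdn_addl.
have lt_sib := dyadic_sibling_lt ltjm ltim dvd_i.
rewrite f_halve // !IHj ?(ltnW ltjm) // (big_ord_exp2S j (fun l => f 0 (i + l)%N)).
rewrite expnS natrM invfM exprS.
under [X in _ = _ *: (_ *: (_ + X))]eq_bigr do rewrite addnA.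
by rewrite -!scalerDr !scalerA; congr (_ *: _); ring.
Qed.

End DyadicAverage.

Lemma guidedE (R : realType) (n : nat) (C : Type) (s : shortcut R n C)
    (omega : R) (x : 'rV[R]_n) (t : R) (c : C) (delta : R) :
  guided s omega x t c delta
    = s x t None delta + omega *: (s x t (Some c) delta - s x t None delta).
Proof. by rewrite /guided scalerBl scale1r scalerBr addrCA. Qed.

Theorem mainTheorem2 (R : realType) (n : nat) (C : Type) (c : C) (m : nat)
  (s : shortcut R n C) (w : R) (y : nat -> 'rV[R]_n) :
  (0 < n)%N -> (0 < m)%N ->
  (forall j i : nat, (j < m)%N -> (i < 2 ^ m)%N -> (2 ^ j.+1 %| i)%N ->
     s (y i) (i%:R / (2 ^ m)%:R) (Some c) ((2 ^ j.+1)%:R * (1 / (2 ^ m)%:R))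
       = 2^-1 *: (guided s w (y i) (i%:R / (2 ^ m)%:R) c
                    ((2 ^ j)%:R * (1 / (2 ^ m)%:R))
                  + guided s w (y (i + 2 ^ j)%N) ((i + 2 ^ j)%:R / (2 ^ m)%:R) c
                    ((2 ^ j)%:R * (1 / (2 ^ m)%:R)))
     /\
     s (y i) (i%:R / (2 ^ m)%:R) None ((2 ^ j.+1)%:R * (1 / (2 ^ m)%:R))
       = 2^-1 *: (s (y i) (i%:R / (2 ^ m)%:R) None
                    ((2 ^ j)%:R * (1 / (2 ^ m)%:R))
                  + s (y (i + 2 ^ j)%N) ((i + 2 ^ j)%:R / (2 ^ m)%:R) None
                    ((2 ^ j)%:R * (1 / (2 ^ m)%:R)))) ->
  forall j i : nat, (j <= m)%N -> (i < 2 ^ m)%N -> (2 ^ j %| i)%N ->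
    s (y i) (i%:R / (2 ^ m)%:R) None ((2 ^ j)%:R * (1 / (2 ^ m)%:R))
      = ((2 ^ j)%:R)^-1 *: \sum_(l < 2 ^ j)
            s (y (i + l)%N) ((i + l)%:R / (2 ^ m)%:R) None (1 / (2 ^ m)%:R)
    /\
    guided s w (y i) (i%:R / (2 ^ m)%:R) c ((2 ^ j)%:R * (1 / (2 ^ m)%:R))
      = ((2 ^ j)%:R)^-1 *: \sum_(l < 2 ^ j)
            guided s (w ^+ j.+1) (y (i + l)%N) ((i + l)%:R / (2 ^ m)%:R) c
              (1 / (2 ^ m)%:R).
Proof.
move=> _ _ consistent j i ltjm ltim dvd_i.
pose null j i := s (y i) (i%:R / (2 ^ m)%:R) None ((2 ^ j)%:R * (1 / (2 ^ m)%:R)).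
pose offset j i :=
  s (y i) (i%:R / (2 ^ m)%:R) (Some c) ((2 ^ j)%:R * (1 / (2 ^ m)%:R)) - null j i.
have null_halve j' i' : (j' < m)%N -> (i' < 2 ^ m)%N -> (2 ^ j'.+1 %| i')%N ->
    null j'.+1 i' = 1 *: (2^-1 *: (null j' i' + null j' (i' + 2 ^ j')%N)).
  by move=> *; rewrite scale1r; case: (consistent j' i').
have offset_halve j' i' : (j' < m)%N -> (i' < 2 ^ m)%N -> (2 ^ j'.+1 %| i')%N ->
    offset j'.+1 i' = w *: (2^-1 *: (offset j' i' + offset j' (i' + 2 ^ j')%N)).
  move=> ltjm' ltim' dvd_i'; rewrite /offset /null.
  have [-> ->] := consistent j' i' ltjm' ltim' dvd_i'.
  by rewrite !guidedE addrACA scalerDr addrAC subrr add0r -scalerDr !scalerA mulrC.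
have null_avg := dyadic_average null_halve ltjm ltim dvd_i.
have offset_avg := dyadic_average offset_halve ltjm ltim dvd_i.
rewrite expr1n scale1r in null_avg.
have null0 l : null 0%N l = s (y l) (l%:R / (2 ^ m)%:R) None (1 / (2 ^ m)%:R).
  by congr (s _ _ _ _); exact: mul1r.
have offset0 l : offset 0%N l = s (y l) (l%:R / (2 ^ m)%:R) (Some c) (1 / (2 ^ m)%:R)
                                - s (y l) (l%:R / (2 ^ m)%:R) None (1 / (2 ^ m)%:R).
  by rewrite /offset null0; congr (s _ _ _ _ - _); exact: mul1r.
split.
  by rewrite -[LHS]/(null j i) null_avg; under eq_bigr do rewrite null0.
rewrite guidedE -[LHS]/(null j i + w *: offset j i) offset_avg null_avg.
rewrite scalerA -exprS scalerA mulrC -scalerA -scalerDr.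
under [in RHS]eq_bigr do rewrite guidedE -offset0 -null0.
by rewrite [in RHS]big_split -scaler_sumr.
Qed.
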